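(* Let $A\in\mathbb{R}^{m\times N}$ and $K\subset[N]$. The following are equivalent: (i) $\mathbb{1}_K$ and $\mathbb{1}-\mathbb{1}_K=\mathbb{1}_{K^c}$ are the unique solutions of $\min\|x\|_1$ subject to $Ax=b$, $x\in[0,1]^N$, with $b=A\mathbb{1}_K$ and $b=A\mathbb{1}_{K^c}$, respectively; (ii) $\ker(A)\cap H_K=\{0\}$; (iii) $\{x\in[0,1]^N: Ax=A\mathbb{1}_K\}=\{\mathbb{1}_K\}$; (iv) $\{x\in[0,1]^N: Ax=A\mathbb{1}_{K^c}\}=\{\mathbb{1}_{K^c}\}$.
   Context: $[N]=\{1,\dots,N\}$, $K^c=[N]\setminus K$, $\mathbb{1}\in\mathbb{R}^N$ is the all-ones vector and $\mathbb{1}_K$ the indicator vector of $K$. $H_K=\{w\in\mathbb{R}^N: w_i\le 0 \text{ for } i\in K,\ w_i\ge 0 \text{ for } i\notin K\}$. *)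

From mathcomp Require Import all_boot all_order all_algebra.
From mathcomp Require Import reals.
Set Implicit Arguments. Unset Strict Implicit. Unset Printing Implicit Defensive.
Import Order.TTheory GRing.Theory Num.Theory.
Local Open Scope ring_scope.

Definition indic (R : realType) (N : nat) (K : {set 'I_N}) : 'cV[R]_N :=
  \col_i (if i \in K then 1 else 0).

Definition ones (R : realType) (N : nat) : 'cV[R]_N := \col_i 1.

Definition l1norm (R : realType) (N : nat) (x : 'cV[R]_N) : R :=
  \sum_i `|x i 0|.

Definition in_box (R : realType) (N : nat) (x : 'cV[R]_N) : Prop :=
  forall i, 0 <= x i 0 /\ x i 0 <= 1.

Definition unique_l1_box_solution (R : realType) (m N : nat)
  (A : 'M[R]_(m, N)) (b : 'cV[R]_m) (x0 : 'cV[R]_N) : Prop :=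
  [/\ in_box x0, A *m x0 = b &
      forall x, in_box x -> A *m x = b -> x <> x0 -> l1norm x0 < l1norm x].

Definition in_HK (R : realType) (N : nat) (K : {set 'I_N}) (w : 'cV[R]_N) : Prop :=
  forall i, (i \in K -> w i 0 <= 0) /\ (i \notin K -> 0 <= w i 0).

(** The identity [1_{K^c} = 1 - 1_K] pairs the two feasible sets: [x] is
    feasible for [b = A 1_K] iff [1 - x] is feasible for [b = A 1_{K^c}], and on
    the box [||x||_1 + ||1 - x||_1 = N]. Hence two strict minimality claims
    cannot both hold for a second feasible point, so (i) forces (iii).
    Feasible points for [A 1_K] are exactly [1_K + w] with [w] in [ker A] and in
    [H_K], while every [w] in [ker A] and [H_K] can be scaled down to make
    [1_K + t w] feasible; this gives (ii) <-> (iii). Since [H_{K^c} = -H_K],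
    (ii) is symmetric in [K] and [K^c], so (iv) is (iii) for [K^c]. *)

From mathcomp Require Import all_boot all_order all_algebra.
From mathcomp Require Import reals lra.
Set Implicit Arguments. Unset Strict Implicit. Unset Printing Implicit Defensive.
Import Order.TTheory GRing.Theory Num.Theory.
Local Open Scope ring_scope.

Section Box.
Variables (R : realType) (N : nat).
Implicit Types (x w : 'cV[R]_N) (K : {set 'I_N}).

Lemma indic_setC K : indic R (~: K) = ones R N - indic R K.
Proof.
by apply/matrixP => i j; rewrite !mxE in_setC; case: (i \in K); rewrite ?subrr ?subr0.
Qed.

Lemma in_box_indic K : in_box (indic R K).
Proof. by move=> i; rewrite mxE; case: (i \in K); lra. Qed.

Lemma in_box_onesB x : in_box x -> in_box (ones R N - x).
Proof. by move=> hx i; rewrite !mxE; case: (hx i); lra. Qed.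

Lemma l1norm_box x : in_box x -> l1norm x = \sum_i x i 0.
Proof. by move=> hx; apply: eq_bigr => i _; rewrite ger0_norm //; case: (hx i). Qed.

Lemma l1norm_box_onesB x : in_box x -> l1norm x + l1norm (ones R N - x) = N%:R.
Proof.
move=> hx; have hy := in_box_onesB hx.
rewrite !l1norm_box // -big_split /=.
rewrite (eq_bigr (fun=> 1)) ?sumr_const ?card_ord // => i _.
by rewrite !mxE addrC subrK.
Qed.

Lemma in_HK_setC K w : in_HK K w -> in_HK (~: K) (- w).
Proof.
move=> hw i; rewrite mxE in_setC negbK oppr_le0 oppr_ge0.
by case: (hw i) => h1 h2; split.
Qed.

Lemma in_HK_scale K w (t : R) : 0 <= t -> in_HK K w -> in_HK K (t *: w).
Proof.
move=> t0 hw i; rewrite mxE; case: (hw i) => h1 h2; split=> hi.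
  by rewrite mulr_ge0_le0 ?h1.
by rewrite mulr_ge0 ?h2.
Qed.

Lemma exists_small_scale w : exists2 t : R, 0 < t & forall i, `|t * w i 0| <= 1.
Proof.
have w0 : 0 <= l1norm w by apply: sumr_ge0.
exists (1 + l1norm w)^-1 => [|i]; first by rewrite invr_gt0; lra.
rewrite normrM gtr0_norm ?invr_gt0 1?mulrC ?ler_pdivrMr; try lra.
have : `|w i 0| <= l1norm w by rewrite /l1norm (bigD1 i) //= lerDl sumr_ge0.
lra.
Qed.

Lemma in_box_indicD K w :
  in_HK K w -> (forall i, `|w i 0| <= 1) -> in_box (indic R K + w).
Proof.
move=> hw hb i; rewrite !mxE; have := hb i; rewrite ler_norml => /andP[lo hi].
case: (hw i) => h1 h2.
by case: (boolP (i \in K)) => hK; [have := h1 hK | have := h2 hK]; lra.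
Qed.

Lemma in_HK_subr_indic K x : in_box x -> in_HK K (x - indic R K).
Proof.
move=> hx i; rewrite !mxE; case: (hx i) => h0 h1.
by split=> hK; rewrite ?hK ?(negbTE hK); lra.
Qed.

End Box.

Section Fibers.
Variables (R : realType) (m N : nat) (A : 'M[R]_(m, N)).

Definition kerHK_trivial (K : {set 'I_N}) : Prop :=
  forall w : 'cV[R]_N, A *m w = 0 -> in_HK K w -> w = 0.

Definition box_fiber_singleton (x0 : 'cV[R]_N) : Prop :=
  forall x : 'cV[R]_N, in_box x /\ A *m x = A *m x0 <-> x = x0.

Lemma kerHK_trivial_setC K : kerHK_trivial (~: K) <-> kerHK_trivial K.
Proof.
suff imp L : kerHK_trivial L -> kerHK_trivial (~: L).
  by split=> [/imp|/imp //]; rewrite setCK.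
move=> h w hA hw; apply: oppr_inj; rewrite oppr0; apply: h.
  by rewrite mulmxN hA oppr0.
by rewrite -[L]setCK; apply: in_HK_setC.
Qed.

Lemma kerHK_trivialP K : kerHK_trivial K <-> box_fiber_singleton (indic R K).
Proof.
split=> h.
  move=> x; split=> [[hx hA]|->]; last by split; first exact: in_box_indic.
  apply/subr0_eq/h; first by rewrite mulmxBr hA subrr.
  exact: in_HK_subr_indic.
move=> w hA hw; have [t t0 ht] := exists_small_scale w.
have /h : in_box (indic R K + t *: w) /\ A *m (indic R K + t *: w) = A *m indic R K.
  split; last by rewrite mulmxDr -scalemxAr hA scaler0 addr0.
  by apply: in_box_indicD => [|i]; [apply: in_HK_scale; rewrite ?ltW | rewrite mxE].
rewrite -{2}[indic R K]addr0 => /addrI/eqP.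
by rewrite scaler_eq0 gt_eqF //= => /eqP.
Qed.

Lemma box_fiber_singleton_unique_l1 x0 :
  box_fiber_singleton x0 -> unique_l1_box_solution A (A *m x0) x0.
Proof.
move=> h; have [hx0 _] := (h x0).2 erefl.
by split=> // x hx hA; case; apply/h.
Qed.

Lemma unique_l1_onesB_box_fiber_singleton x0 :
  unique_l1_box_solution A (A *m x0) x0 ->
  unique_l1_box_solution A (A *m (ones R N - x0)) (ones R N - x0) ->
  box_fiber_singleton x0.
Proof.
move=> [hx0 _ min0] [_ _ min1] x; split=> [[hx hA]|->//].
case: (eqVneq x x0) => // /eqP hne; exfalso.
have lt0 := min0 x hx hA hne.
have lt1 : l1norm (ones R N - x0) < l1norm (ones R N - x).
  apply: min1; first exact: in_box_onesB.
    by rewrite !mulmxBr hA.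
  by move/addrI/oppr_inj/hne.
have := l1norm_box_onesB hx; have := l1norm_box_onesB hx0; lra.
Qed.

End Fibers.

Theorem proposition2p3 (R : realType) (m N : nat) (A : 'M[R]_(m, N))
    (K : {set 'I_N}) :
  let iK := indic R K in
  let iKc := indic R (~: K) in
  [/\ (* (i) <-> (ii) *)
      (unique_l1_box_solution A (A *m iK) iK /\
       unique_l1_box_solution A (A *m iKc) iKc) <->
      (forall w : 'cV[R]_N, A *m w = 0 -> in_HK K w -> w = 0),
      (* (ii) <-> (iii) *)
      (forall w : 'cV[R]_N, A *m w = 0 -> in_HK K w -> w = 0) <->
      (forall x : 'cV[R]_N, in_box x /\ A *m x = A *m iK <-> x = iK)
    & (* (iii) <-> (iv) *)
      (forall x : 'cV[R]_N, in_box x /\ A *m x = A *m iK <-> x = iK) <->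
      (forall x : 'cV[R]_N, in_box x /\ A *m x = A *m iKc <-> x = iKc)].
Proof.
move=> iK iKc.
have ii_iii : kerHK_trivial A K <-> box_fiber_singleton A iK := kerHK_trivialP A K.
have ii_iv : kerHK_trivial A K <-> box_fiber_singleton A iKc.
  by rewrite -kerHK_trivial_setC; exact: kerHK_trivialP.
split.
- split=> [[u1 u2]|h].
    by apply/ii_iii/unique_l1_onesB_box_fiber_singleton; rewrite -?indic_setC.
  by split; apply: box_fiber_singleton_unique_l1; [apply/ii_iii | apply/ii_iv].
- exact: ii_iii.
- by split=> h; [apply/ii_iv/ii_iii | apply/ii_iii/ii_iv].
Qed.
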